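(* Let $\mathbf A$ be a pseudo-Kleene lattice. Then $\mathbf A$ satisfies (SP1) if and only if $\mathbf A$ contains no subalgebra isomorphic to $\mathbf B_6$ and no subalgebra isomorphic to $\mathbf B_8$.
   Context: A pseudo-Kleene lattice is an algebra $(A,\land,\lor,{}',0,1)$ that is a bounded lattice with an antitone involution ${}'$ ($x\leq y\Rightarrow y'\leq x'$, $x''=x$) satisfying $x\land x'\leq y\lor y'$; subalgebras are with respect to $\land,\lor,{}',0,1$. (SP1) is the condition: for all $x,y$, if $x\leq y$ and $x'\land y=(x\land x')\lor(y\land y')$, then $y\land(x\lor x')=x\lor(y\land y')$. $\mathbf B_6$ is the pseudo-Kleene lattice (ortholattice) with elements $0,x,y,y',x',1$, covers $0\prec x\prec y\prec 1$, $0\prec y'\prec x'\prec 1$, involution $u\leftrightarrow u'$, $0\leftrightarrow 1$. $\mathbf B_8$ is the pseudo-Kleene lattice with elements $0,z',x,y,y',x',z,1$, covers $0\prec z'$, $z'\prec x\prec y\prec z$, $z'\prec y'\prec x'\prec z$, $z\prec 1$, involution $u\leftrightarrow u'$, $0\leftrightarrow 1$. *)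

From mathcomp Require Import all_boot all_order.
Set Implicit Arguments. Unset Strict Implicit. Unset Printing Implicit Defensive.
Import Order.TTheory.
Local Open Scope order_scope.

Section PK.
Context {disp : Order.disp_t} {T : tbLatticeType disp}.

Definition pseudo_kleene (c : T -> T) : Prop :=
  [/\ (forall x y : T, x <= y -> c y <= c x),
      (forall x : T, c (c x) = x) &
      (forall x y : T, x `&` c x <= y `|` c y)].

Definition SP1 (c : T -> T) : Prop :=
  forall x y : T, x <= y ->
    c x `&` y = (x `&` c x) `|` (y `&` c y) ->
    y `&` (x `|` c x) = x `|` (y `&` c y).

(* f : S -> T is an embedding of the algebra (S, m, j, i, o, t) into
   (T, meet, join, c, \bot, \top); its image is a subalgebra isomorphic to S. *)
Definition embedding (S : Type) (m j : S -> S -> S) (i : S -> S) (o t : S)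
  (c : T -> T) (f : S -> T) : Prop :=
  [/\ injective f,
      (forall a b, f (m a b) = f a `&` f b),
      (forall a b, f (j a b) = f a `|` f b),
      (forall a, f (i a) = c (f a)) &
      (f o = \bot /\ f t = \top)].
End PK.

(* ---- B6 : 0 < x < y < 1,  0 < y' < x' < 1 ---- *)
Inductive B6 := b6_0 | b6_x | b6_y | b6_y' | b6_x' | b6_1.

Definition B6_le (a b : B6) : bool :=
  match a, b with
  | b6_0, _ => true
  | _, b6_1 => true
  | b6_x, (b6_x | b6_y) => true
  | b6_y, b6_y => true
  | b6_y', (b6_y' | b6_x') => true
  | b6_x', b6_x' => true
  | _, _ => false
  end.
Definition B6_meet (a b : B6) : B6 :=
  if B6_le a b then a else if B6_le b a then b else b6_0.
Definition B6_join (a b : B6) : B6 :=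
  if B6_le a b then b else if B6_le b a then a else b6_1.
Definition B6_inv (a : B6) : B6 :=
  match a with
  | b6_0 => b6_1 | b6_1 => b6_0
  | b6_x => b6_x' | b6_x' => b6_x
  | b6_y => b6_y' | b6_y' => b6_y
  end.

(* ---- B8 : 0 < z' < x < y < z < 1,  z' < y' < x' < z ---- *)
Inductive B8 := b8_0 | b8_z' | b8_x | b8_y | b8_y' | b8_x' | b8_z | b8_1.

Definition B8_le (a b : B8) : bool :=
  match a, b with
  | b8_0, _ => true
  | _, b8_1 => true
  | b8_z', (b8_z' | b8_x | b8_y | b8_y' | b8_x' | b8_z) => true
  | b8_x, (b8_x | b8_y | b8_z) => true
  | b8_y, (b8_y | b8_z) => true
  | b8_y', (b8_y' | b8_x' | b8_z) => true
  | b8_x', (b8_x' | b8_z) => true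
  | b8_z, b8_z => true
  | _, _ => false
  end.
Definition B8_meet (a b : B8) : B8 :=
  if B8_le a b then a else if B8_le b a then b else b8_z'.
Definition B8_join (a b : B8) : B8 :=
  if B8_le a b then b else if B8_le b a then a else b8_z.
Definition B8_inv (a : B8) : B8 :=
  match a with
  | b8_0 => b8_1 | b8_1 => b8_0
  | b8_z' => b8_z | b8_z => b8_z'
  | b8_x => b8_x' | b8_x' => b8_x
  | b8_y => b8_y' | b8_y' => b8_y
  end.

Definition has_sub_B6 {disp} {T : tbLatticeType disp} (c : T -> T) : Prop :=
  exists f : B6 -> T, embedding B6_meet B6_join B6_inv b6_0 b6_1 c f.
Definition has_sub_B8 {disp} {T : tbLatticeType disp} (c : T -> T) : Prop :=
  exists f : B8 -> T, embedding B8_meet B8_join B8_inv b8_0 b8_1 c f.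

(* If (SP1) fails at x ≤ y, put a := x ∨ (y ∧ y') and b := y ∧ (x ∨ x').
   Then a < b, and b ∧ a' and a ∧ b' both equal m := x' ∧ y; call such a pair
   tight.  For a tight pair all four meets of a, b with a', b' equal m, and
   m < a < b < m', m < b' < a' < m', so 0, m, a, b, b', a', m', 1 form a copy
   of B8 inside A, or of B6 when m = 0.  Conversely, (SP1) passes to
   subalgebras and fails in B6 and B8. *)

From mathcomp Require Import all_boot all_order.
Set Implicit Arguments. Unset Strict Implicit. Unset Printing Implicit Defensive.
Import Order.TTheory.
Local Open Scope order_scope.

Section PseudoKleene.
Context {disp : Order.disp_t} {T : tbLatticeType disp} (c : T -> T).
Hypothesis pk : pseudo_kleene c.

Lemma compl_anti x y : x <= y -> c y <= c x.
Proof. by case: pk => anti _ _; apply: anti. Qed.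

Lemma complK : involutive c.
Proof. by case: pk => _ K _. Qed.

Lemma compl_inj : injective c.
Proof. exact: inv_inj complK. Qed.

Lemma meet_compl_le_join_compl x y : x `&` c x <= y `|` c y.
Proof. by case: pk => _ _; apply. Qed.

Lemma compl_le x y : (c x <= c y) = (y <= x).
Proof.
by apply/idP/idP => [/compl_anti|/compl_anti //]; rewrite !complK.
Qed.

Lemma compl_lt x y : (c x < c y) = (y < x).
Proof. by rewrite !lt_neqAle compl_le (inj_eq compl_inj) eq_sym. Qed.

Lemma complU x y : c (x `|` y) = c x `&` c y.
Proof.
apply: le_anti; rewrite lexI !compl_anti ?leUl ?leUr //=.
rewrite -[X in X <= _]complK compl_le leUx.
by rewrite -[x <= _]compl_le -[y <= _]compl_le !complK leIl leIr.
Qed.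

Lemma complI x y : c (x `&` y) = c x `|` c y.
Proof. by rewrite -[RHS]complK complU !complK. Qed.

Lemma compl0 : c \bot = \top.
Proof. by apply/eqP; rewrite eq_le lex1 -[X in X <= _]complK compl_le le0x. Qed.

Lemma compl1 : c \top = \bot.
Proof. by rewrite -compl0 complK. Qed.

Lemma SP1_embedding (S : Type) (mS jS : S -> S -> S) (iS : S -> S) (o t : S)
    (f : S -> T) :
  SP1 c -> embedding mS jS iS o t c f ->
  forall x y, mS x y = x -> mS (iS x) y = jS (mS x (iS x)) (mS y (iS y)) ->
  mS y (jS x (iS x)) = jS x (mS y (iS y)).
Proof.
move=> sp1 [f_inj fM fJ fC _] x y xy hyp; apply: f_inj.
rewrite fM fJ fC fJ fM fC; apply: sp1; first by apply/meet_idPl; rewrite -fM xy.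
by rewrite -fC -fM hyp fJ !fM !fC.
Qed.

Definition tight_pair (a b : T) := a < b /\ b `&` c a = a `&` c b.

Lemma tight_pair_compl a b : tight_pair a b -> tight_pair (c b) (c a).
Proof. by case=> ab sq; split; rewrite ?compl_lt // !complK meetC sq meetC. Qed.

Lemma tight_lt_meet a b : tight_pair a b -> a `&` c b < a.
Proof.
case=> ab sq; rewrite lt_neqAle leIl andbT; apply: contraTneq ab => E.
have /meet_idPl ba : b <= c a by rewrite -compl_le complK -E leIr.
by rewrite -ba sq E ltxx.
Qed.

Lemma tight_pair_of_not_SP1 x y : x <= y ->
  c x `&` y = (x `&` c x) `|` (y `&` c y) ->
  y `&` (x `|` c x) != x `|` (y `&` c y) ->
  tight_pair (x `|` (y `&` c y)) (y `&` (x `|` c x)).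
Proof.
move=> xy hyp; set a := x `|` (y `&` c y); set b := y `&` (x `|` c x) => ne.
have ab : a <= b by rewrite leUx !lexI xy leUl leIl meet_compl_le_join_compl.
split; first by rewrite lt_neqAle eq_sym ne ab.
apply/le_anti/andP; split; last exact: leI2 ab (compl_anti ab).
have cxy_le : c x `&` y <= a `&` c b.
  rewrite hyp lexI leU2 ?leIl //= /b complI complU complK leUx meetC leUr.
  exact: le_trans (leIr _ _) (leUl _ _).
apply: le_trans cxy_le; rewrite meetC leI2 ?leIl ?compl_anti ?leUl //.
Qed.

Lemma embedding_of_meet_compl (S : Type) (mS jS : S -> S -> S) (iS : S -> S)
    (o t : S) (f : S -> T) :
  (forall u v, jS u v = iS (mS (iS u) (iS v))) ->
  (forall u v, f (mS u v) = f u `&` f v) ->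
  (forall u, f (iS u) = c (f u)) ->
  (forall u v, f (mS u v) = f (jS u v) -> u = v) ->
  f o = \bot -> f t = \top ->
  embedding mS jS iS o t c f.
Proof.
move=> jE fM fC fMJ fo ft.
have fJ u v : f (jS u v) = f u `|` f v by rewrite jE fC fM !fC complI !complK.
by split=> // u v fuv; apply: fMJ; rewrite fM fJ fuv meetxx joinxx.
Qed.

Section TightPairEmbedding.
Variables a b : T.
Hypothesis tp : tight_pair a b.
Local Notation m := (a `&` c b).

Lemma tight_pair_meets : [/\ a `&` c a = m, b `&` c a = m & b `&` c b = m].
Proof.
have [/ltW ab sq] := tp.
by split=> //; apply/le_anti; rewrite -{1}sq !leI2 ?compl_anti.
Qed.

Lemma tight_pair_chain : [/\ m < a, b < c m, m < c b, c b < c a & c a < c m].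
Proof.
have [ab _] := tp.
have mcb : m < c b by have := tight_lt_meet (tight_pair_compl tp); rewrite complK meetC.
split; rewrite ?compl_lt ?tight_lt_meet //.
by rewrite -[b in b < _]complK compl_lt.
Qed.

Section B8.
Hypothesis m_neq0 : m != \bot.

Definition B8_of (u : B8) : T :=
  match u with
  | b8_0 => \bot | b8_z' => m | b8_x => a | b8_y => b
  | b8_y' => c b | b8_x' => c a | b8_z => c m | b8_1 => \top
  end.

Lemma B8_of_lt u v : B8_le u v -> ~~ B8_le v u -> B8_of u < B8_of v.
Proof.
have [ma bcm mcb cbca cacm] := tight_pair_chain; have [ab _] := tp.
have m_gt0 : \bot < m by rewrite lt0x.
have cm_lt1 : c m < \top by rewrite -compl0 compl_lt.
have lt_tr (x y z : T) : x < y -> y < z -> x < z by exact: lt_trans.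
by case: u; case: v => //= _ _; eauto.
Qed.

Lemma B8_of_le u v : B8_le u v -> B8_of u <= B8_of v.
Proof.
move=> uv; case: (boolP (B8_le v u)) => [vu|/(B8_of_lt uv)/ltW //].
by have -> : v = u by case: u v uv vu => [] [].
Qed.

Lemma B8_of_meet u v : B8_of (B8_meet u v) = B8_of u `&` B8_of v.
Proof.
have [aca bca bcb] := tight_pair_meets.
rewrite /B8_meet; case: ifP => [/B8_of_le/meet_l -> //|vu].
case: ifP => [/B8_of_le/meet_r -> //|uv].
by case: u v uv vu => [] [] //= _ _; rewrite ?(meetC (c _)).
Qed.

Lemma B8_of_compl u : B8_of (B8_inv u) = c (B8_of u).
Proof. by case: u; rewrite /= ?complK ?compl0 ?compl1. Qed.

Lemma B8_of_meet_join u v : B8_of (B8_meet u v) = B8_of (B8_join u v) -> u = v.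
Proof.
case: (boolP (B8_le (B8_join u v) (B8_meet u v))) => [|ge]; first by case: u; case: v.
by move/eqP; rewrite lt_eqF // B8_of_lt //; case: u {ge}; case: v.
Qed.

Lemma tight_pair_B8 : has_sub_B8 c.
Proof.
exists B8_of; apply: embedding_of_meet_compl => //.
- by case; case.
- exact: B8_of_meet.
- exact: B8_of_compl.
- exact: B8_of_meet_join.
Qed.

End B8.

Section B6.
Hypothesis m_eq0 : m = \bot.

Definition B6_of (u : B6) : T :=
  match u with
  | b6_0 => \bot | b6_x => a | b6_y => b
  | b6_y' => c b | b6_x' => c a | b6_1 => \top
  end.

Lemma B6_of_lt u v : B6_le u v -> ~~ B6_le v u -> B6_of u < B6_of v.
Proof.
have [] := tight_pair_chain; rewrite m_eq0 compl0 => a_gt0 b_lt1 cb_gt0 cbca ca_lt1.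
have [ab _] := tp; have lt_tr (x y z : T) : x < y -> y < z -> x < z by exact: lt_trans.
by case: u; case: v => //= _ _; eauto.
Qed.

Lemma B6_of_le u v : B6_le u v -> B6_of u <= B6_of v.
Proof.
move=> uv; case: (boolP (B6_le v u)) => [vu|/(B6_of_lt uv)/ltW //].
by have -> : v = u by case: u v uv vu => [] [].
Qed.

Lemma B6_of_meet u v : B6_of (B6_meet u v) = B6_of u `&` B6_of v.
Proof.
have [] := tight_pair_meets; rewrite m_eq0 => aca bca bcb.
rewrite /B6_meet; case: ifP => [/B6_of_le/meet_l -> //|vu].
case: ifP => [/B6_of_le/meet_r -> //|uv].
by case: u v uv vu => [] [] //= _ _; rewrite ?(meetC (c _)).
Qed.

Lemma B6_of_compl u : B6_of (B6_inv u) = c (B6_of u).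
Proof. by case: u; rewrite /= ?complK ?compl0 ?compl1. Qed.

Lemma B6_of_meet_join u v : B6_of (B6_meet u v) = B6_of (B6_join u v) -> u = v.
Proof.
case: (boolP (B6_le (B6_join u v) (B6_meet u v))) => [|ge]; first by case: u; case: v.
by move/eqP; rewrite lt_eqF // B6_of_lt //; case: u {ge}; case: v.
Qed.

Lemma tight_pair_B6 : has_sub_B6 c.
Proof.
exists B6_of; apply: embedding_of_meet_compl => //.
- by case; case.
- exact: B6_of_meet.
- exact: B6_of_compl.
- exact: B6_of_meet_join.
Qed.

End B6.

Lemma tight_pair_sub : has_sub_B6 c \/ has_sub_B8 c.
Proof.
case: (eqVneq m \bot) => m0; [left; exact: tight_pair_B6 | right; exact: tight_pair_B8].
Qed.

End TightPairEmbedding.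
End PseudoKleene.

Theorem theorem3p2 (disp : Order.disp_t) (T : tbLatticeType disp) (c : T -> T) :
  pseudo_kleene c ->
  (SP1 c <-> (~ has_sub_B6 c /\ ~ has_sub_B8 c)).
Proof.
move=> pk; split.
  (* B6 and B8 themselves violate (SP1) at their pair x <= y. *)
  move=> sp1; split.
    by case=> f /(SP1_embedding sp1)/(_ b6_x b6_y erefl erefl).
  by case=> f /(SP1_embedding sp1)/(_ b8_x b8_y erefl erefl).
case=> noB6 noB8 x y xy hyp.
case: (eqVneq (y `&` (x `|` c x)) (x `|` (y `&` c y))) => // ne.
by case: (tight_pair_sub pk (tight_pair_of_not_SP1 pk xy hyp ne)).
Qed.
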